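(* Let $V=\mathbb{C}^6$ and let $\pi\subset\mathbb{P}(\wedge^2V)$ be a projective plane all of whose points have rank exactly four. If every line contained in $\pi$ is special, then there is a hyperplane $H\subset V$ such that $\pi\subset\mathbb{P}(\wedge^2H)$ (i.e. $\pi$ is contained in the linear span of a sub-Grassmannian $\mathbb{G}(1,4)\subset\mathbb{G}(1,5)$).
   Context: Elements of $\wedge^2\mathbb{C}^6$ are identified with skew-symmetric $6\times6$ matrices; rank means matrix rank. Fix a basis $e_0,\dots,e_5$ of $V$. A projective line in $\mathbb{P}(\wedge^2V)$ all of whose points have rank four is called special if it is $PGL_6$-equivalent to the line spanned by $e_0\wedge e_2+e_1\wedge e_3$ and $e_0\wedge e_4+e_1\wedge e_2$. Work over $\mathbb{C}$. *)

From HB Require Import structures.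
From mathcomp Require Import all_boot all_order all_algebra.
From mathcomp Require Import Rstruct.
From mathcomp Require Import complex.
Set Implicit Arguments. Unset Strict Implicit. Unset Printing Implicit Defensive.
Import Order.TTheory GRing.Theory Num.Theory.
Local Open Scope ring_scope.

Notation CC := (complex Rdefinitions.R).

(* Elements of wedge^2 C^6 as skew_sym6-symmetric 6x6 matrices, stored as row
   vectors of length 36 via mxvec. A linear subspace of wedge^2 V is the row
   space of a matrix 'M_(k, 36). *)
Definition skew_sym6 (A : 'M[CC]_6) : Prop := A^T = - A.

(* u /\ w as a skew_sym6 matrix (e_i /\ e_j <-> E_ij - E_ji). *)
Definition wedge (u w : 'rV[CC]_6) : 'M[CC]_6 := u^T *m w - w^T *m u.

Definition e (i : 'I_6) : 'rV[CC]_6 := delta_mx 0 i.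
Definition special_line : 'M[CC]_(2, 6 * 6) :=
  col_mx (mxvec (wedge (e (inord 0)) (e (inord 2)) + wedge (e (inord 1)) (e (inord 3))))
         (mxvec (wedge (e (inord 0)) (e (inord 4)) + wedge (e (inord 1)) (e (inord 2)))).

Definition act (g : 'M[CC]_6) (v : 'rV[CC]_(6 * 6)) : 'rV[CC]_(6 * 6) :=
  mxvec (g^T *m vec_mx v *m g).
Definition act_rows (k : nat) (g : 'M[CC]_6) (W : 'M[CC]_(k, 6 * 6)) :
  'M[CC]_(k, 6 * 6) := \matrix_(i < k) act g (row i W).

Definition special_line_of (W : 'M[CC]_(2, 6 * 6)) : Prop :=
  \rank W = 2%N /\
  (forall v : 'rV[CC]_(6 * 6), (v <= W)%MS -> v != 0 -> \rank (vec_mx v) = 4%N) /\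
  exists g : 'M[CC]_6, g \in unitmx /\ (act_rows g W == special_line)%MS.

(* wedge^2 H for H the row space of h : 'M_(k,6): the span of the wedges
   h_i /\ h_j of its rows. *)
Definition wedge2 (k : nat) (h : 'M[CC]_(k, 6)) : 'M[CC]_(6 * 6) :=
  (\sum_(i < k) \sum_(j < k) <<mxvec (wedge (row i h) (row j h))>>)%MS.

From mathcomp Require Import all_boot all_order all_algebra.
From mathcomp Require Import Rstruct complex.
Set Implicit Arguments. Unset Strict Implicit. Unset Printing Implicit Defensive.
Import GRing.Theory Num.Theory.
Local Open Scope ring_scope.

(* Points of P(wedge^2 V) are skew forms; the kernel of a point w is the space of
   row vectors y with y w = 0.  A special line has a vertex, a nonzero vector c
   killing all its points (e_5 for the standard line), and the kernels of its
   points span a 4-space (e_2, ..., e_5).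
   Write pi = <W, u> with W a line, and let c be a vertex of W.  If c did not kill
   u, then for each point w of W the line <w, u> would have a vertex c' killing w
   and u; the 2-dimensional kernel of w contains the independent vectors c and c',
   hence lies in <c> + ker u, of dimension at most 3, contradicting the 4-space
   spanned by the kernels along W.  So c kills all of pi, and a skew form killed
   by c lies in wedge^2 H for the hyperplane H = ker c^T. *)

Section RowSpaces.
Variable F : fieldType.

Lemma submx_col_mxl m1 m2 n (A : 'M[F]_(m1, n)) (B : 'M[F]_(m2, n)) :
  (A <= col_mx A B)%MS.
Proof. by rewrite -addsmxE addsmxSl. Qed.

Lemma submx_col_mxr m1 m2 n (A : 'M[F]_(m1, n)) (B : 'M[F]_(m2, n)) :
  (B <= col_mx A B)%MS.
Proof. by rewrite -addsmxE addsmxSr. Qed.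

Lemma mxrank_col_mx_le m1 m2 n (A : 'M[F]_(m1, n)) (B : 'M[F]_(m2, n)) :
  (\rank (col_mx A B) <= \rank A + \rank B)%N.
Proof. by rewrite -addsmxE; case: (mxrank_adds_leqif A B). Qed.

Lemma row_free_col_mxl m1 m2 n (A : 'M[F]_(m1, n)) (B : 'M[F]_(m2, n)) :
  row_free (col_mx A B) -> row_free A.
Proof.
rewrite -!row_leq_rank => freeAB; rewrite -(leq_add2r m2).
apply: leq_trans freeAB (leq_trans (mxrank_col_mx_le A B) _).
by rewrite leq_add2l rank_leq_row.
Qed.

Lemma row_free_col_mxr m1 m2 n (A : 'M[F]_(m1, n)) (B : 'M[F]_(m2, n)) :
  row_free (col_mx A B) -> row_free B.
Proof.
rewrite -!row_leq_rank => freeAB; rewrite -(leq_add2l m1).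
apply: leq_trans freeAB (leq_trans (mxrank_col_mx_le A B) _).
by rewrite leq_add2r rank_leq_row.
Qed.

Lemma row_free_col_mx_notsub m1 m2 n (A : 'M[F]_(m1, n)) (B : 'M[F]_(m2.+1, n)) :
  row_free (col_mx A B) -> ~~ (B <= A)%MS.
Proof.
rewrite -row_leq_rank -addsmxE => freeAB; apply/negP => /addsmx_idPl sBA.
move: freeAB; rewrite sBA => /leq_trans/(_ (rank_leq_row A)).
by rewrite addnS ltnNge leq_addr.
Qed.

Lemma rank_col_mx2 n (x z : 'rV[F]_n) :
  x != 0 -> ~~ (z <= x)%MS -> \rank (col_mx x z) = 2.
Proof.
move=> x0 zx; have [le_x_xz eq_x_xz] := mxrank_leqif_sup (@submx_col_mxl 1 1 n x z).
rewrite rank_rV x0 /= in le_x_xz eq_x_xz.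
apply/eqP; rewrite eqn_leq rank_leq_row /= ltn_neqAle le_x_xz andbT eq_x_xz.
by rewrite col_mx_sub negb_and zx orbT.
Qed.

Lemma exists_row_basis m n (M : 'M[F]_(m, n)) r :
  \rank M = r -> exists2 h : 'M[F]_(r, n), \rank h = r & (h :=: M)%MS.
Proof. by move=> <-; exists (row_base M); [rewrite eq_row_base | apply: eq_row_base]. Qed.

Lemma rank_ge_unit_rows k l (G : 'M[F]_(k + l)) m (T : 'M[F]_(m, k + l)) :
  G \in unitmx -> (forall i : 'I_l, row (rshift k i) G <= T)%MS -> (l <= \rank T)%N.
Proof.
move=> Gunit rowsT.
have : row_free (dsubmx G).
  by apply: (@row_free_col_mxr _ _ _ (usubmx G)); rewrite vsubmxK row_free_unit.
rewrite -row_leq_rank => /leq_trans; apply; apply: mxrankS.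
by apply/row_subP => i; rewrite row_dsubmx.
Qed.

Lemma kermx_sub_adds n (A B : 'M[F]_n) (c c' : 'rV[F]_n) :
  \rank (kermx A) = 2 -> c *m A = 0 -> c *m B != 0 ->
  c' != 0 -> c' *m A = 0 -> c' *m B = 0 -> (kermx A <= c + kermx B)%MS.
Proof.
move=> rkA cA cB c'0 c'A c'B.
have c_notin_c' : ~~ (c <= c')%MS.
  by apply: contra cB => /submxP[z ->]; rewrite -mulmxA c'B mulmx0.
have cc'A : (col_mx c' c <= kermx A)%MS.
  by rewrite col_mx_sub; apply/andP; split; apply/sub_kermxP.
have kerA_cc' : (kermx A <= col_mx c' c)%MS.
  by have [_ <-] := mxrank_leqif_sup cc'A; rewrite rank_col_mx2 // rkA.
apply: submx_trans kerA_cc' _; rewrite col_mx_sub addsmxSl andbT.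
by apply: submx_trans (addsmxSr _ _); apply/sub_kermxP.
Qed.

Lemma quad_form_sum_rows k n (h : 'M[F]_(k, n)) (B : 'M[F]_k) :
  h^T *m B *m h = \sum_i \sum_j B i j *: ((row i h)^T *m row j h).
Proof.
rewrite {1}[B]matrix_sum_delta mulmx_sumr mulmx_suml; apply: eq_bigr => i _.
rewrite mulmx_sumr mulmx_suml; apply: eq_bigr => j _.
rewrite -scalemxAr -scalemxAl !rowE trmx_mul trmx_delta.
by rewrite -(mul_delta_mx (0 : 'I_1)) !mulmxA.
Qed.

Definition in_common_ker n m (y : 'rV[F]_n) (W : 'M[F]_(m, n * n)) :=
  forall v, (v <= W)%MS -> y *m vec_mx v = 0.

Lemma in_common_ker_rows n m (y : 'rV[F]_n) (W : 'M[F]_(m, n * n)) :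
  (forall i, y *m vec_mx (row i W) = 0) -> in_common_ker y W.
Proof.
move=> yW v /submxP[z ->]; rewrite (mulmx_sum_row z) linear_sum mulmx_sumr.
by apply: big1 => i _; rewrite linearZ -scalemxAr yW scaler0.
Qed.

Lemma in_common_ker_rV n (y : 'rV[F]_n) (u : 'rV[F]_(n * n)) :
  y *m vec_mx u = 0 -> in_common_ker y u.
Proof. by move=> yu; apply: in_common_ker_rows => i; rewrite row_id. Qed.

Lemma in_common_ker_col_mx n m1 m2 (y : 'rV[F]_n)
    (A : 'M[F]_(m1, n * n)) (B : 'M[F]_(m2, n * n)) :
  in_common_ker y A -> in_common_ker y B -> in_common_ker y (col_mx A B).
Proof.
move=> yA yB; apply: in_common_ker_rows => i; rewrite -(splitK i).
by case: (split i) => j /=; rewrite ?rowKu ?rowKd; [apply: yA | apply: yB]; apply: row_sub.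
Qed.

Lemma neq0_of_mul_vec_mx n (y : 'rV[F]_n) (v : 'rV[F]_(n * n)) :
  y *m vec_mx v != 0 -> v != 0.
Proof. by apply: contraNneq => ->; rewrite linear0 mulmx0. Qed.

End RowSpaces.

Lemma sum_wedge_rows k (h : 'M[CC]_(k, 6)) (B : 'M[CC]_k) :
  \sum_i \sum_j B i j *: wedge (row i h) (row j h) = h^T *m (B - B^T) *m h.
Proof.
rewrite mulmxBr mulmxBl !quad_form_sum_rows [X in _ - X]exchange_big /= -sumrB.
apply: eq_bigr => i _; rewrite -sumrB; apply: eq_bigr => j _.
by rewrite mxE scalerBr.
Qed.

Lemma wedge2_quad_form k (h : 'M[CC]_(k, 6)) (B : 'M[CC]_k) :
  B^T = - B -> (mxvec (h^T *m B *m h) <= wedge2 h)%MS.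
Proof.
move=> skB.
have -> : h^T *m B *m h = 2^-1 *: \sum_i \sum_j B i j *: wedge (row i h) (row j h).
  rewrite sum_wedge_rows skB opprK mulmxDr mulmxDl -mulr2n.
  by rewrite -scalerMnr scalerMnl -mulr_natr mulVf ?scale1r // pnatr_eq0.
rewrite linearZ linear_sum; apply/scalemx_sub/summx_sub => i _.
rewrite linear_sum; apply: summx_sub => j _; rewrite linearZ; apply: scalemx_sub.
by rewrite (sumsmx_sup i) // (sumsmx_sup j) // genmxE.
Qed.

Lemma skew_sub_wedge2 k (h : 'M[CC]_(k, 6)) (A : 'M[CC]_6) :
  A^T = - A -> (A <= h)%MS -> (mxvec A <= wedge2 h)%MS.
Proof.
move=> skA /mulmxKpV; move: (pinvmx h) => p Ah.
have AhT : A = h^T *m p^T *m A.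
  by apply: oppr_inj; rewrite -skA -{1}Ah !trmx_mul skA !mulmxN mulmxA.
have -> : A = h^T *m (p^T *m A *m p) *m h by rewrite !mulmxA -AhT Ah.
apply: wedge2_quad_form.
by rewrite !trmx_mul trmxK skA mulNmx mulmxN mulmxA.
Qed.

Lemma plane_in_wedge2 m (U : 'M[CC]_(m, 6 * 6)) (c : 'rV[CC]_6) :
  c != 0 -> (forall v, (v <= U)%MS -> skew_sym6 (vec_mx v)) -> in_common_ker c U ->
  exists h : 'M[CC]_(5, 6), \rank h = 5 /\ (U <= wedge2 h)%MS.
Proof.
move=> c0 skU cU.
have rkK : \rank (kermx c^T) = 5 by rewrite mxrank_ker mxrank_tr rank_rV c0.
have [h rkh hK] := exists_row_basis rkK.
exists h; split=> //; apply/row_subP => i.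
have iU := row_sub i U; rewrite -(vec_mxK (row i U)).
apply: skew_sub_wedge2 (skU _ iU) _; rewrite hK; apply/sub_kermxP.
by rewrite -[vec_mx _]trmxK -trmx_mul (skU _ iU) mulmxN (cU _ iU) oppr0 trmx0.
Qed.

Local Notation e_ i := (e (inord i)).

Lemma eq_inord n (i j : nat) :
  (i <= n)%N -> (j <= n)%N -> ((inord i : 'I_n.+1) == inord j) = (i == j).
Proof. by move=> ? ?; rewrite -val_eqE /= !inordK. Qed.

Lemma e_neq0 (i : 'I_6) : e i != 0.
Proof. by apply/eqP => /matrixP/(_ 0 i)/eqP; rewrite !mxE !eqxx oner_eq0. Qed.

Lemma e_mul_tr (i j : 'I_6) : e i *m (e j)^T = (i == j)%:R%:M.
Proof.
rewrite /e trmx_delta mul_delta_mx_cond; case: (i == j).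
  by apply/matrixP => a b; rewrite !ord1 !mxE.
by rewrite mulr0n raddf0.
Qed.

Lemma e_mul_wedge (i j k : 'I_6) :
  e i *m wedge (e j) (e k) = (i == j)%:R *: e k - (i == k)%:R *: e j.
Proof. by rewrite /wedge mulmxBr !mulmxA !e_mul_tr !mul_scalar_mx. Qed.

Definition special_a : 'rV[CC]_(6 * 6) :=
  mxvec (wedge (e_ 0) (e_ 2) + wedge (e_ 1) (e_ 3)).
Definition special_b : 'rV[CC]_(6 * 6) :=
  mxvec (wedge (e_ 0) (e_ 4) + wedge (e_ 1) (e_ 2)).

Lemma special_lineE : special_line = col_mx special_a special_b.
Proof. by []. Qed.

Lemma vec_mx_special_ab :
  vec_mx (special_a + special_b) = vec_mx special_a + vec_mx special_b.
Proof. by rewrite linearD. Qed.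

(* Here and below, contextual patterns keep rewrite from trying to unify its
   left-hand side with sums of concrete complex matrices, which is very slow. *)
Lemma e_mul_special_a (i : 'I_6) : e i *m vec_mx special_a =
  (i == inord 0)%:R *: e_ 2 - (i == inord 2)%:R *: e_ 0
  + ((i == inord 1)%:R *: e_ 3 - (i == inord 3)%:R *: e_ 1).
Proof. by rewrite mxvecK mulmxDr [X in X + _]e_mul_wedge [X in _ + X]e_mul_wedge. Qed.

Lemma e_mul_special_b (i : 'I_6) : e i *m vec_mx special_b =
  (i == inord 0)%:R *: e_ 4 - (i == inord 4)%:R *: e_ 0
  + ((i == inord 1)%:R *: e_ 2 - (i == inord 2)%:R *: e_ 1).
Proof. by rewrite mxvecK mulmxDr [X in X + _]e_mul_wedge [X in _ + X]e_mul_wedge. Qed.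

Ltac eval_coeffs :=
  rewrite !eq_inord //= ?(scale0r, scale1r, subr0, sub0r, addr0, add0r, oppr0).

Lemma e2_special_a : e_ 2 *m vec_mx special_a = - e_ 0.
Proof. by rewrite e_mul_special_a; eval_coeffs. Qed.
Lemma e3_special_a : e_ 3 *m vec_mx special_a = - e_ 1.
Proof. by rewrite e_mul_special_a; eval_coeffs. Qed.
Lemma e4_special_a : e_ 4 *m vec_mx special_a = 0.
Proof. by rewrite e_mul_special_a; eval_coeffs. Qed.
Lemma e5_special_a : e_ 5 *m vec_mx special_a = 0.
Proof. by rewrite e_mul_special_a; eval_coeffs. Qed.
Lemma e2_special_b : e_ 2 *m vec_mx special_b = - e_ 1.
Proof. by rewrite e_mul_special_b; eval_coeffs. Qed.
Lemma e3_special_b : e_ 3 *m vec_mx special_b = 0.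
Proof. by rewrite e_mul_special_b; eval_coeffs. Qed.
Lemma e4_special_b : e_ 4 *m vec_mx special_b = - e_ 0.
Proof. by rewrite e_mul_special_b; eval_coeffs. Qed.
Lemma e5_special_b : e_ 5 *m vec_mx special_b = 0.
Proof. by rewrite e_mul_special_b; eval_coeffs. Qed.

Lemma e234_special_ab : (e_ 2 - e_ 3 - e_ 4) *m vec_mx (special_a + special_b) = 0.
Proof.
rewrite vec_mx_special_ab mulmxDr [X in X + _]mulmxBl [X in X - _ + _]mulmxBl.
rewrite [X in _ + X]mulmxBl [X in _ + (X - _)]mulmxBl.
rewrite [X in X - _ - _ + _]e2_special_a [X in _ - X - _ + _]e3_special_a.
rewrite [X in _ - X + _]e4_special_a [X in _ + (X - _ - _)]e2_special_b.
rewrite [X in _ + (_ - X - _)]e3_special_b [X in _ + (_ - X)]e4_special_b.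
by rewrite !subr0 !opprK addrA addrK addNr.
Qed.

Lemma e4_special_ab : e_ 4 *m vec_mx (special_a + special_b) = - e_ 0.
Proof.
rewrite vec_mx_special_ab mulmxDr [X in X + _]e4_special_a.
by rewrite [X in _ + X]e4_special_b add0r.
Qed.

Lemma special_a_neq0 : special_a != 0.
Proof.
by apply: (neq0_of_mul_vec_mx (y := e_ 2)); rewrite e2_special_a oppr_eq0 e_neq0.
Qed.

Lemma special_b_neq0 : special_b != 0.
Proof.
by apply: (neq0_of_mul_vec_mx (y := e_ 4)); rewrite e4_special_b oppr_eq0 e_neq0.
Qed.

Lemma special_ab_neq0 : special_a + special_b != 0.
Proof.
by apply: (neq0_of_mul_vec_mx (y := e_ 4)); rewrite e4_special_ab oppr_eq0 e_neq0.
Qed.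

Lemma special_line_common_ker : in_common_ker (e_ 5) special_line.
Proof.
rewrite special_lineE; apply: (@in_common_ker_col_mx _ _ 1 1); apply: in_common_ker_rV.
  exact: e5_special_a.
exact: e5_special_b.
Qed.

Lemma act_mulmx k (g : 'M[CC]_6) (z : 'rV[CC]_k) (W : 'M[CC]_(k, 6 * 6)) :
  act g (z *m W) = z *m act_rows g W.
Proof.
rewrite (mulmx_sum_row z W) (mulmx_sum_row z (act_rows g W)) /act.
rewrite linear_sum mulmx_sumr mulmx_suml linear_sum; apply: eq_bigr => i _.
by rewrite rowK /act linearZ -scalemxAr -scalemxAl linearZ.
Qed.

Lemma act0 (g : 'M[CC]_6) : act g 0 = 0.
Proof. by rewrite /act linear0 mulmx0 mul0mx linear0. Qed.

Lemma act_ker (g : 'M[CC]_6) (y : 'rV[CC]_6) w : g \in unitmx ->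
  (y *m vec_mx (act g w) == 0) = (y *m g^T *m vec_mx w == 0).
Proof. by move=> gU; rewrite /act mxvecK !mulmxA mulmx_free_eq0 // row_free_unit. Qed.

Lemma special_line_vertex W :
  special_line_of W -> exists2 c : 'rV[CC]_6, c != 0 & in_common_ker c W.
Proof.
case=> _ [_ [g [gU /andP[W_std _]]]].
exists (e_ 5 *m g^T); first by rewrite mulmx_free_eq0 ?row_free_unit ?unitmx_tr ?e_neq0.
move=> w /submxP[z ->]; apply/eqP; rewrite -act_ker // act_mulmx; apply/eqP.
by apply: special_line_common_ker; apply: submx_trans W_std; exact: submxMl.
Qed.

Lemma special_line_kernels_rank W m (T : 'M[CC]_(m, 6)) : special_line_of W ->
  (forall w (y : 'rV_6), (w <= W)%MS -> w != 0 -> y *m vec_mx w = 0 -> (y <= T)%MS) ->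
  (4 <= \rank T)%N.
Proof.
case=> _ [_ [g [gU /andP[_ std_W]]]] kerT.
have std_kerT (s : 'rV_(6 * 6)) (x : 'rV_6) : (s <= special_line)%MS ->
    s != 0 -> x *m vec_mx s = 0 -> (x *m g^T <= T)%MS.
  move=> /submx_trans/(_ std_W)/submxP[z ->] s0 xs.
  apply: (kerT (z *m W)); first exact: submxMl.
    by apply: contraNneq s0 => zW0; rewrite -act_mulmx zW0 act0.
  by apply/eqP; rewrite -act_ker // act_mulmx xs.
have a_std : (special_a <= special_line)%MS.
  by rewrite special_lineE; apply: (@submx_col_mxl _ 1 1).
have b_std : (special_b <= special_line)%MS.
  by rewrite special_lineE; apply: (@submx_col_mxr _ 1 1).
have ab_std := addmx_sub a_std b_std.
have e3T : (e_ 3 *m g^T <= T)%MS := std_kerT _ _ b_std special_b_neq0 e3_special_b.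
have e4T : (e_ 4 *m g^T <= T)%MS := std_kerT _ _ a_std special_a_neq0 e4_special_a.
have e5T : (e_ 5 *m g^T <= T)%MS := std_kerT _ _ a_std special_a_neq0 e5_special_a.
have e2T : (e_ 2 *m g^T <= T)%MS.
  have := std_kerT _ _ ab_std special_ab_neq0 e234_special_ab.
  rewrite !mulmxBl => /addmx_sub/(_ e4T)/addmx_sub/(_ e3T).
  by rewrite !subrK.
apply: (@rank_ge_unit_rows _ 2 4 g^T); first by rewrite unitmx_tr.
move=> i; rewrite rowE -[rshift 2 i]inord_val.
case: i => [[|[|[|[|k]]]] Hk]; [exact: e2T | exact: e3T | exact: e4T | exact: e5T |].
by exfalso; move: Hk; rewrite !ltnS ltn0.
Qed.

Section SpecialPlane.

Variables (W : 'M[CC]_(2, 6 * 6)) (u : 'rV[CC]_(6 * 6)).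
Hypothesis free_Wu : row_free (col_mx W u).
Hypothesis rank4 : forall v, (v <= col_mx W u)%MS -> v != 0 -> \rank (vec_mx v) = 4%N.
Hypothesis lines_special : forall L : 'M[CC]_(2, 6 * 6),
  \rank L = 2%N -> (L <= col_mx W u)%MS -> special_line_of L.

Let u_notin_W : ~~ (u <= W)%MS := row_free_col_mx_notsub free_Wu.

Lemma special_line_W : special_line_of W.
Proof.
apply: lines_special; first exact/eqP/(row_free_col_mxl free_Wu).
exact: submx_col_mxl.
Qed.

Lemma special_line_through_u (w : 'rV[CC]_(6 * 6)) :
  (w <= W)%MS -> w != 0 -> special_line_of (col_mx w u).
Proof.
move=> wW w0; apply: lines_special.
  by apply: rank_col_mx2 w0 _; apply: contra u_notin_W => /submx_trans; apply.
by rewrite (@col_mx_sub _ 1 1) submx_col_mxr (submx_trans wW) ?submx_col_mxl.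
Qed.

Lemma common_ker_W_kills_u c : in_common_ker c W -> c *m vec_mx u = 0.
Proof.
move=> cW; apply/eqP/contraT => cu.
have u0 : u != 0 by apply: contraNneq u_notin_W => ->; apply: sub0mx.
have rank_ker v : (v <= col_mx W u)%MS -> v != 0 -> \rank (kermx (vec_mx v)) = 2%N.
  by move=> vWu v0; rewrite mxrank_ker rank4.
pose T := (c + kermx (vec_mx u))%MS.
have rankT : (\rank T <= 3)%N.
  apply: leq_trans (mxrank_adds_leqif _ _).1 _.
  by rewrite rank_ker ?submx_col_mxr // (leq_add (rank_leq_row c)).
have kerT w (y : 'rV_6) : (w <= W)%MS -> w != 0 -> y *m vec_mx w = 0 -> (y <= T)%MS.
  move=> wW w0 yw.
  have [c' c'0 c'wu] := special_line_vertex (special_line_through_u wW w0).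
  have wWu : (w <= col_mx W u)%MS := submx_trans wW (submx_col_mxl _ _).
  apply: submx_trans (kermx_sub_adds (rank_ker _ wWu w0) (cW _ wW) cu c'0 _ _).
  - exact/sub_kermxP.
  - exact: c'wu (submx_col_mxl w u).
  - exact: c'wu (submx_col_mxr w u).
by have := special_line_kernels_rank special_line_W kerT; rewrite leqNgt ltnS rankT.
Qed.

End SpecialPlane.

Theorem mainTheorem6 (U : 'M[CC]_(3, 6 * 6)) :
  \rank U = 3%N ->
  (forall v : 'rV[CC]_(6 * 6), (v <= U)%MS -> skew_sym6 (vec_mx v)) ->
  (forall v : 'rV[CC]_(6 * 6), (v <= U)%MS -> v != 0 -> \rank (vec_mx v) = 4%N) ->
  (forall W : 'M[CC]_(2, 6 * 6), \rank W = 2%N -> (W <= U)%MS -> special_line_of W) ->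
  exists h : 'M[CC]_(5, 6), \rank h = 5%N /\ (U <= wedge2 h)%MS.
Proof.
move=> rankU skew rank4 lines_special.
have free_U : row_free (U : 'M_(2 + 1, _)) by rewrite /row_free rankU.
rewrite -(vsubmxK (U : 'M_(2 + 1, _))) in free_U skew rank4 lines_special *.
have [c c0 cW] := special_line_vertex (special_line_W free_U lines_special).
apply: (plane_in_wedge2 c0 skew); apply: (@in_common_ker_col_mx _ _ 2 1) => //.
exact: in_common_ker_rV (common_ker_W_kills_u free_U rank4 lines_special cW).
Qed.
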